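(* Let $\mathcal{M}$ be a minimally $k$-level matroid on ground set $E$ and $F$ a $k$-level flacet of $\mathcal{M}$. Then $\overline{F}:=E\setminus F$ satisfies $\operatorname{rk}(\overline{F})=|\overline{F}|$, i.e. $\overline{F}$ is independent.
   Context: Levelness of a matroid $\mathcal{M}=(E,\mathcal{B})$: the least $k$ such that every facet-defining affine function takes at most $k$ distinct values on $V_{\mathcal{M}}=\{\mathbf{1}_B:B\in\mathcal{B}\}$ (facets are inclusion-maximal faces $\{v\in V_{\mathcal{M}}:\ell(v)=0\}\neq V_{\mathcal{M}}$ for affine $\ell\ge0$ on $V_{\mathcal{M}}$). $\mathcal{M}$ is minimally $k$-level if its levelness is $k$ and every proper minor has strictly smaller levelness. A flacet is a flat $\emptyset\neq S\subsetneq E$ such that the restriction $\mathcal{M}|_S$ and contraction $\mathcal{M}/S$ are connected; a flacet $F$ is $k$-level if $\ell_F(x)=\sum_{e\in F}x_e$ takes exactly $k$ distinct values on $V_{\mathcal{M}}$. *)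

From HB Require Import structures.
From mathcomp Require Import all_boot all_order all_algebra.
From mathcomp Require Import reals.
Set Implicit Arguments. Unset Strict Implicit. Unset Printing Implicit Defensive.
Import Order.TTheory GRing.Theory Num.Theory.
Local Open Scope ring_scope.

Section Matroids.
Variable T : finType.

Definition is_matroid (E : {set T}) (Bs : {set {set T}}) : Prop :=
  [/\ Bs != set0,
      (forall B, B \in Bs -> B \subset E) &
      (forall B1 B2 x, B1 \in Bs -> B2 \in Bs -> x \in B1 :\: B2 ->
         exists2 y, y \in B2 :\: B1 & (y |: (B1 :\ x)) \in Bs)].

Definition rk (Bs : {set {set T}}) (A : {set T}) : nat :=
  (\max_(B in Bs) #|A :&: B|)%N.

Definition indep (Bs : {set {set T}}) (A : {set T}) : Prop :=
  exists2 B, B \in Bs & A \subset B.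

Definition circuit (E : {set T}) (Bs : {set {set T}}) (C : {set T}) : Prop :=
  [/\ C \subset E, ~ indep Bs C & forall x, x \in C -> indep Bs (C :\ x)].

Definition connected (E : {set T}) (Bs : {set {set T}}) : Prop :=
  forall x y, x \in E -> y \in E -> x != y ->
    exists C, circuit E Bs C /\ x \in C /\ y \in C.

(* restriction M|S (S \subset E): ground set S *)
Definition restrict_bases (Bs : {set {set T}}) (S : {set T}) : {set {set T}} :=
  [set B :&: S | B in Bs & #|B :&: S| == rk Bs S].

(* contraction M/C (C \subset E): ground set E :\: C *)
Definition contract_bases (Bs : {set {set T}}) (C : {set T}) : {set {set T}} :=
  [set B :\: C | B in Bs & #|B :&: C| == rk Bs C].

Definition flat (E : {set T}) (Bs : {set {set T}}) (S : {set T}) : Prop :=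
  S \subset E /\ forall e, e \in E :\: S -> (rk Bs S < rk Bs (e |: S))%N.

Definition flacet (E : {set T}) (Bs : {set {set T}}) (S : {set T}) : Prop :=
  [/\ flat E Bs S, S != set0, S \proper E,
      connected S (restrict_bases Bs S) &
      connected (E :\: S) (contract_bases Bs S)].

Variable R : realType.

(* the vertex 1_B of the base polytope *)
Definition ind (B : {set T}) : T -> R := fun e => (e \in B)%:R.

Definition aff (E : {set T}) (a : T -> R) (b : R) (v : T -> R) : R :=
  \sum_(e in E) a e * v e + b.

Definition nvalues (E : {set T}) (Bs : {set {set T}}) (a : T -> R) (b : R) : nat :=
  size (undup [seq aff E a b (ind B) | B <- enum Bs]).

Definition nonneg_on (E : {set T}) (Bs : {set {set T}}) (a : T -> R) (b : R) : Prop :=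
  forall B, B \in Bs -> 0 <= aff E a b (ind B).

(* zero set of l on V_M, identified with a subset of the bases *)
Definition zeroset (E : {set T}) (Bs : {set {set T}}) (a : T -> R) (b : R) : {set {set T}} :=
  [set B in Bs | aff E a b (ind B) == 0].

Definition face (E : {set T}) (Bs : {set {set T}}) (G : {set {set T}}) : Prop :=
  exists a b, nonneg_on E Bs a b /\ G = zeroset E Bs a b.

Definition facet (E : {set T}) (Bs : {set {set T}}) (G : {set {set T}}) : Prop :=
  [/\ face E Bs G, G != Bs &
      forall H, face E Bs H -> H != Bs -> G \subset H -> H = G].

Definition facet_defining (E : {set T}) (Bs : {set {set T}}) (a : T -> R) (b : R) : Prop :=
  nonneg_on E Bs a b /\ facet E Bs (zeroset E Bs a b).

Definition at_most_level (E : {set T}) (Bs : {set {set T}}) (k : nat) : Prop :=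
  forall a b, facet_defining E Bs a b -> (nvalues E Bs a b <= k)%N.

Definition levelness_is (E : {set T}) (Bs : {set {set T}}) (k : nat) : Prop :=
  at_most_level E Bs k /\ forall j, (j < k)%N -> ~ at_most_level E Bs j.

(* M is minimally k-level: levelness k and every proper minor M/C\D
   (C, D disjoint subsets of E, not both empty) has strictly smaller levelness *)
Definition minimally_level (E : {set T}) (Bs : {set {set T}}) (k : nat) : Prop :=
  levelness_is E Bs k /\
  forall C D : {set T}, C \subset E -> D \subset E -> [disjoint C & D] ->
    C :|: D != set0 ->
    exists2 j, (j < k)%N &
      levelness_is (E :\: (C :|: D))
        (restrict_bases (contract_bases Bs C) (E :\: (C :|: D))) j.

Definition flacet_level (E : {set T}) (Bs : {set {set T}}) (F : {set T}) (k : nat) : Prop :=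
  nvalues E Bs (fun e => (e \in F)%:R) 0 = k.

End Matroids.

(* Suppose E \ F is dependent and pick e in E \ F outside a basis of E \ F; with
   the flatness of F this makes e neither a loop nor a coloop of M / F.  As M / F
   is connected, one of (M / F) \ e, (M / F) / e is connected; let M' be M \ e or
   M / e accordingly.  Then M' | F = M | F and M' / F are connected, so exchanges
   between bases of M' meeting F in rk F elements link any two elements of F and
   any two elements of (E - e) \ F.  This forces the face {B : |B ∩ F| = rk F} of
   M' to be a facet, cut out by x ↦ rk F − Σ_{f ∈ F} x_f.  Every value of |B ∩ F|
   on M is also attained on M', so this function takes k values on M',
   contradicting that the proper minor M' has levelness < k. *)

From HB Require Import structures.
From mathcomp Require Import all_boot all_order all_algebra.
From mathcomp Require Import reals.
From Stdlib Require Import Classical Relations.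
From mathcomp Require Import zify ring lra.

Set Implicit Arguments. Unset Strict Implicit. Unset Printing Implicit Defensive.
Import Order.TTheory GRing.Theory Num.Theory.

Section BaseExchange.
Variable T : finType.
Implicit Types (S : {set {set T}}) (A B C E I J : {set T}).

Definition base_exchange S := forall B1 B2 x, B1 \in S -> B2 \in S ->
  x \in B1 :\: B2 -> exists2 y, y \in B2 :\: B1 & y |: (B1 :\ x) \in S.

Lemma cardsU1D1 B x y : x \in B -> y \notin B -> #|y |: (B :\ x)| = #|B|.
Proof. by move=> xB yB; rewrite cardsU1 !inE negb_and yB orbT (cardsD1 x B) xB. Qed.

Lemma setU1D1D B1 B2 x y : y \in B2 -> x \in B1 :\: B2 ->
  (y |: (B1 :\ x)) :\: B2 = (B1 :\: B2) :\ x.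
Proof.
move=> yB2 _; apply/setP=> u; rewrite !inE.
by have [->|_] := eqVneq u y; rewrite ?yB2 ?andbF //= andbCA.
Qed.

Lemma indep_subset S I J : indep S J -> I \subset J -> indep S I.
Proof. by move=> [B hB sB] sI; exists B => //; apply: subset_trans sB. Qed.

Section Exchange.
Variable S : {set {set T}}.
Hypothesis exS : base_exchange S.

Lemma base_exchange_step B1 B2 x : B1 \in S -> B2 \in S -> x \in B1 :\: B2 ->
  exists2 y, y \in B2 :\: B1 &
    y |: (B1 :\ x) \in S /\ #|(y |: (B1 :\ x)) :\: B2| = #|B1 :\: B2|.-1.
Proof.
move=> h1 h2 xD; have [y yD hy] := exS h1 h2 xD; exists y => //; split=> //.
by rewrite setU1D1D //; [rewrite (cardsD1 x (B1 :\: B2)) xD | case/setDP: yD].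
Qed.

Lemma base_subset_eq B1 B2 : B1 \in S -> B2 \in S -> B1 \subset B2 -> B1 = B2.
Proof.
move=> h1 h2 sub; apply/eqP; rewrite eqEsubset sub; apply/subsetPn => -[y yB2 yB1].
have yD : y \in B2 :\: B1 by rewrite inE yB1 yB2.
have [z /setDP[zB1 zB2] _] := exS h2 h1 yD.
by rewrite (subsetP sub z zB1) in zB2.
Qed.

Lemma card_base_eq B1 B2 : B1 \in S -> B2 \in S -> #|B1| = #|B2|.
Proof.
move=> h1 h2; move: {2}#|B1 :\: B2| (erefl #|B1 :\: B2|) => n.
elim: n B1 h1 => [|n IH] B hB hn.
  have : #|B :\: B2| == 0 by rewrite hn.
  by rewrite cards_eq0 setD_eq0 => /(base_subset_eq hB h2) ->.
have /set0Pn[w wD] : B :\: B2 != set0 by rewrite -card_gt0 hn.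
have [y /setDP[_ yB] [hB' hn']] := base_exchange_step hB h2 wD.
by rewrite -(cardsU1D1 (setDP wD).1 yB) IH // hn' hn.
Qed.

Lemma indep_augment I J : indep S I -> indep S J -> #|I| < #|J| ->
  exists2 z, z \in J :\: I & indep S (z |: I).
Proof.
move=> [BI hBI sI] [BJ hBJ sJ] lt; apply: NNPP => noz.
have noz' z : z \in J :\: I -> ~ indep S (z |: I) by move=> zD hz; apply: noz; exists z.
move: {2}#|BI :\: BJ| (erefl #|BI :\: BJ|) => n.
elim: n BI hBI sI => [|n IH] B hB sIB hn.
  have : #|B :\: BJ| == 0 by rewrite hn.
  rewrite cards_eq0 setD_eq0 => /(base_subset_eq hB hBJ) eB.
  have /set0Pn[z zD] : J :\: I != set0.
    rewrite -card_gt0; have := cardsID I J; have := subset_leq_card (subsetIr J I); lia.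
  apply: (noz' z zD); exists BJ => //; rewrite -eB subUset sub1set sIB andbT.
  by rewrite eB (subsetP sJ) //; case/setDP: zD.
have [/existsP[w]|/existsPn onlyIBJ] := boolP [exists w, w \in B :\: (I :|: BJ)].
  rewrite !inE negb_or => /andP[/andP[wI wBJ] wB].
  have wD : w \in B :\: BJ by rewrite inE wBJ wB.
  have [y /setDP[yBJ _] [hB' hn']] := base_exchange_step hB hBJ wD.
  apply: (IH _ hB'); last by rewrite hn' hn.
  apply/subsetP=> u uI; rewrite !inE (subsetP sIB) // andbT orbC.
  by apply/orP; left; apply: contraNneq wI => <-.
have sBI : B :\: I \subset BJ :\: J.
  apply/subsetP=> u /setDP[uB uI]; have := onlyIBJ u; rewrite !inE (negbTE uI) uB /= andbT negbK.
  move=> uBJ; rewrite uBJ andbT; apply/negP=> uJ; apply: (noz' u); first by rewrite inE uI uJ.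
  by exists B => //; rewrite subUset sub1set uB.
have := cardsID I B; have := cardsID J BJ.
rewrite (setIidPr sIB) (setIidPr sJ).
have := subset_leq_card sBI; have := card_base_eq hB hBJ; lia.
Qed.

Lemma indep_extend I J : indep S I -> indep S J ->
  exists I', [/\ indep S I', I \subset I', I' \subset I :|: J & #|J| <= #|I'|].
Proof.
move=> hI hJ; move: {2}(#|J| - #|I|) (leqnn (#|J| - #|I|)) => n.
elim: n I hI => [|n IH] I hI hn.
  by exists I; split; rewrite ?subsetUl //; lia.
have [hle|hlt] := leqP #|J| #|I|; first by exists I; split; rewrite ?subsetUl.
have [z /setDP[zJ zI] hz] := indep_augment hI hJ hlt.
have [|I' [h1 h2 h3 h4]] := IH (z |: I) hz; first by rewrite cardsU1 zI; lia.
exists I'; split=> //; first by apply: subset_trans h2; apply: subsetUr.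
apply: (subset_trans h3); rewrite !subUset sub1set inE zJ orbT subsetUl.
by rewrite subsetUr.
Qed.

Lemma indep_base I B : indep S I -> B \in S -> #|B| <= #|I| -> I \in S.
Proof.
move=> [B' hB' sI] hB le.
suff -> : I = B' by [].
by apply/eqP; rewrite eqEcard sI (card_base_eq hB' hB).
Qed.

Lemma circuit_base_exchange E C x y : circuit E S C -> x \in C -> y \in C -> x != y ->
  exists2 B : {set T}, B \in S & [/\ x \in B, y \notin B & y |: (B :\ x) \in S].
Proof.
move=> [_ depC minC] xC yC xy.
have [B hB sB] := minC y yC.
have iB : indep S B by exists B.
have [I' [i1 i2 i3 i4]] := indep_extend (minC x xC) iB.
have I'S := indep_base i1 hB i4.
have inC u : u \in C -> u != y -> u \in B by move=> uC uy; rewrite (subsetP sB) // !inE uy.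
have xB : x \in B by exact: inC.
have yB : y \notin B.
  apply: contra_notN depC => yB; exists B => //; apply/subsetP=> u uC.
  by have [->|] := eqVneq u y; last exact: inC.
have xI' : x \notin I'.
  apply: contra_notN depC => xI; exists I' => //; apply/subsetP=> u uC.
  by have [->|ux] := eqVneq u x; rewrite // (subsetP i2) // !inE ux.
exists B => //; split=> //; suff -> : y |: (B :\ x) = I' by [].
apply/esym/eqP; rewrite eqEcard cardsU1D1 // i4 andbT; apply/subsetP=> u uI.
have [eux|ux] := eqVneq u x; first by rewrite -eux uI in xI'.
move: (subsetP i3 u uI); rewrite !inE ux /=.
by case/orP=> [uC|->]; rewrite ?orbT //; have [->|/(inC u uC)->] := eqVneq u y; rewrite ?eqxx ?orbT.
Qed.

Lemma base_meet_card_between A B1 B2 v : B1 \in S -> B2 \in S ->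
  #|B1 :&: A| <= v <= #|B2 :&: A| -> exists2 B : {set T}, B \in S & #|B :&: A| = v.
Proof.
move=> h1 h2; move: {2}#|B1 :\: B2| (erefl #|B1 :\: B2|) => n.
elim: n B1 h1 => [|n IH] B hB hn /andP[lo hi].
  have : #|B :\: B2| == 0 by rewrite hn.
  rewrite cards_eq0 setD_eq0 => /(base_subset_eq hB h2) eB.
  by exists B2 => //; apply/eqP; rewrite eqn_leq hi -eB lo.
have [ge|lt] := leqP v #|B :&: A|; first by exists B => //; apply/eqP; rewrite eqn_leq lo ge.
have /set0Pn[w wD] : B :\: B2 != set0 by rewrite -card_gt0 hn.
have [y _ [hB' hn']] := base_exchange_step hB h2 wD.
apply: (IH _ hB'); first by rewrite hn' hn.
rewrite hi andbT; apply: leq_trans (_ : #|y |: (B :&: A)| <= v).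
  by apply: subset_leq_card; rewrite setIUl setUSS // ?subsetIl // setSI // subsetDl.
by rewrite cardsU1; case: (y \notin _) => /=; lia.
Qed.

End Exchange.

Definition delete_bases S e := [set B in S | e \notin B].
Definition contract1_bases S e := [set B :\ e | B in S & e \in B].

Lemma delete_exchange S e : base_exchange S -> base_exchange (delete_bases S e).
Proof.
move=> exS B1 B2 x /setIdP[h1 e1] /setIdP[h2 e2] xD.
have [y /setDP[yB2 yB1] hy] := exS B1 B2 x h1 h2 xD.
exists y; first by rewrite inE yB1 yB2.
rewrite !inE hy negb_or negb_and e1 orbT andbT.
by apply: contraNneq e2 => ->.
Qed.

Lemma contract1_exchange S e : base_exchange S -> base_exchange (contract1_bases S e).
Proof.
move=> exS _ _ x /imsetP[B1 + ->] /imsetP[B2 + ->]; rewrite !inE.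
move=> /andP[h1 e1] /andP[h2 e2] /andP[xB2 /andP[xe xB1]].
have xD : x \in B1 :\: B2 by rewrite inE xB1 andbT; move: xB2; rewrite xe.
have [y /setDP[yB2 yB1] hy] := exS B1 B2 x h1 h2 xD.
have ye : y != e by apply: contraNneq yB1 => ->.
exists y; first by rewrite !inE ye yB2 yB1.
apply/imsetP; exists (y |: (B1 :\ x)).
  by rewrite !inE hy e1 andbT [e == x]eq_sym xe orbT.
apply/setP=> u; rewrite !inE.
by have [->|] := eqVneq u y; rewrite ?ye // andbCA.
Qed.

Lemma delete_circuit E S C e : base_exchange S -> (exists2 B : {set T}, B \in S & e \notin B) ->
  circuit E S C -> e \notin C -> circuit (E :\ e) (delete_bases S e) C.
Proof.
move=> exS [B1 h1 e1] [sC depC minC] eC; split.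
- by apply/subsetP=> u uC; rewrite !inE (subsetP sC) // andbT; apply: contraNneq eC => <-.
- by move=> [B]; rewrite inE => /andP[hB _] sB; apply: depC; exists B.
move=> z zC; have iB1 : indep S B1 by exists B1.
have [I' [i1 i2 i3 i4]] := indep_extend exS (minC z zC) iB1.
exists I' => //; rewrite inE (indep_base exS i1 h1 i4) /=.
apply/negP=> eI; move: (subsetP i3 e eI); rewrite !inE (negbTE e1) orbF.
by case/andP=> _ eC'; rewrite eC' in eC.
Qed.

Lemma contract1_circuit E S C e : circuit E S C -> e \in C ->
  circuit (E :\ e) (contract1_bases S e) (C :\ e).
Proof.
move=> [sC depC minC] eC; split.
- by apply/subsetP=> u; rewrite !inE => /andP[-> uC]; rewrite (subsetP sC).
- move=> [_ /imsetP[B + ->]]; rewrite inE => /andP[hB eB] sB; apply: depC.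
  exists B => //; apply/subsetP=> u uC.
  have [->//|ue] := eqVneq u e.
  by have := subsetP sB u; rewrite !inE ue uC => /(_ isT) /andP[].
move=> z; rewrite !inE => /andP[ze zC].
have [B hB sB] := minC z zC.
have eB : e \in B by apply: (subsetP sB); rewrite !inE eC eq_sym ze.
exists (B :\ e); first by apply/imsetP; exists B => //; rewrite inE hB eB.
apply/subsetP=> u; rewrite !inE => /andP[uz /andP[ue uC]].
by rewrite ue (subsetP sB) // !inE uz uC.
Qed.

Definition circuit_linked E S x y := exists C, circuit E S C /\ x \in C /\ y \in C.

Definition circuit_connected E S :=
  forall x y, x \in E -> y \in E -> clos_refl_sym_trans T (circuit_linked E S) x y.

(* In a 2-colouring of the edges of the complete graph on D, one colour class
   spans a connected graph; this stands in for Tutte's theorem that N \ e or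
   N / e is connected. *)
Lemma two_colouring_connected (D : {set T}) (P Q : T -> T -> Prop) :
  (forall u v, u \in D -> v \in D -> u != v -> P u v \/ Q u v) ->
  (forall u v, u \in D -> v \in D -> clos_refl_sym_trans T P u v) \/
  (forall u v, u \in D -> v \in D -> clos_refl_sym_trans T Q u v).
Proof.
move=> PQ; have [|/not_all_ex_not[x /not_all_ex_not[y]]] :=
  classic (forall u v, u \in D -> v \in D -> clos_refl_sym_trans T P u v); first by left.
move=> /(@imply_to_and (x \in D)) [xD /(@imply_to_and (y \in D)) [yD nxy]]; right.
have nexy : x != y by apply: contra_notN nxy => /eqP exy; rewrite exy; apply: rst_refl.
have Qxy : Q x y by case: (PQ x y xD yD nexy) => // Pxy; case: nxy; exact: rst_step.
suff toX w : w \in D -> clos_refl_sym_trans T Q w x.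
  by move=> u v uD vD; apply: rst_trans (toX u uD) (rst_sym _ _ _ _ (toX v vD)).
move=> wD; have [->|wx] := eqVneq w x; first exact: rst_refl.
have [->|wy] := eqVneq w y; first exact/rst_sym/rst_step.
case: (PQ w x wD xD wx) => [Pwx|]; last exact: rst_step.
case: (PQ w y wD yD wy) => [Pwy|Qwy].
  by case: nxy; apply: rst_trans (rst_sym _ _ _ _ (rst_step _ _ _ _ Pwx)) (rst_step _ _ _ _ Pwy).
exact: rst_trans (rst_step _ _ _ _ Qwy) (rst_sym _ _ _ _ (rst_step _ _ _ _ Qxy)).
Qed.

Lemma clos_rst_weaken (P Q : T -> T -> Prop) x y :
  (forall u v, P u v -> u != v -> Q u v) ->
  clos_refl_sym_trans T P x y -> clos_refl_sym_trans T Q x y.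
Proof.
move=> PQ; elim=> [u v Puv|u|u v _ IH|u v w _ IHuv _ IHvw].
- by have [->|uv] := eqVneq u v; [apply: rst_refl | apply/rst_step/PQ].
- exact: rst_refl.
- exact: rst_sym.
- exact: rst_trans IHuv IHvw.
Qed.

End BaseExchange.

Section VertexValues.
Variables (R : realType) (T : finType).
Implicit Types (S : {set {set T}}) (A B E F : {set T}) (a : T -> R) (b : R).
Local Open Scope ring_scope.

Lemma aff_ind E a b B : B \subset E -> aff E a b (ind R B) = \sum_(e in B) a e + b.
Proof.
move=> sB; congr (_ + _); rewrite (big_setID B) /= (setIidPr sB) addrC big1 ?add0r.
  by apply: eq_bigr => e eB; rewrite /ind eB mulr1.
by move=> e /setDP[_ eB]; rewrite /ind (negbTE eB) mulr0.
Qed.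

Lemma sum_indicator A F : \sum_(e in A) ((e \in F)%:R : R) = #|A :&: F|%:R.
Proof.
rewrite (big_setID F) /= [X in _ + X]big1 ?addr0; last by move=> e /setDP[_ /negbTE ->].
by rewrite -sumr_const; apply: eq_bigr => e /setIP[_ ->].
Qed.

Lemma aff_indicator E F B : B \subset E ->
  aff E (fun e => (e \in F)%:R) 0 (ind R B) = #|B :&: F|%:R.
Proof. by move=> sB; rewrite aff_ind // sum_indicator addr0. Qed.

Lemma aff_coindicator E F B (f : nat) : B \subset E ->
  aff E (fun e => - (e \in F)%:R) f%:R (ind R B) = f%:R - #|B :&: F|%:R.
Proof. by move=> sB; rewrite aff_ind // sumrN sum_indicator addrC. Qed.

Lemma nvalues_le_inj E1 E2 S1 S2 a1 b1 a2 b2 (phi : R -> R) : injective phi ->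
  (forall B1, B1 \in S1 -> exists2 B2 : {set T}, B2 \in S2 &
     aff E2 a2 b2 (ind R B2) = phi (aff E1 a1 b1 (ind R B1))) ->
  (nvalues E1 S1 a1 b1 <= nvalues E2 S2 a2 b2)%N.
Proof.
move=> inj_phi H; rewrite /nvalues -(size_map phi); apply: uniq_leq_size.
  by rewrite (map_inj_uniq inj_phi) undup_uniq.
move=> _ /mapP[_ /[!mem_undup] /mapP[B1 /[!mem_enum] h1 ->] ->].
by have [B2 h2 <-] := H B1 h1; apply: map_f; rewrite mem_enum.
Qed.

Lemma nvalues_gt0 E S a b : S != set0 -> (0 < nvalues E S a b)%N.
Proof.
case/set0Pn=> B hB; rewrite /nvalues -has_predT.
by apply/hasP; exists (aff E a b (ind R B)); rewrite // mem_undup; apply: map_f; rewrite mem_enum.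
Qed.

Lemma nvalues_le1 E S a b c :
  (forall B, B \in S -> aff E a b (ind R B) = c) -> (nvalues E S a b <= 1)%N.
Proof.
move=> H; apply: (uniq_leq_size (undup_uniq _) (s2 := [:: c])).
by move=> _ /[!mem_undup] /mapP[B /[!mem_enum] /H -> ->]; rewrite inE.
Qed.

Lemma face_subset E S G : face R E S G -> G \subset S.
Proof. by case=> a [b [_ ->]]; apply/subsetP=> B; rewrite inE => /andP[]. Qed.

Lemma facet_or_larger_face E S G : face R E S G -> G != S -> ~ facet R E S G ->
  exists H, [/\ face R E S H, H != S & G \proper H].
Proof.
move=> fG GS nfG; apply: NNPP => noH; apply: nfG; split=> // H fH HS sGH.
apply/eqP; apply: contra_notT noH => HG; exists H; split=> //.
by rewrite properEneq sGH eq_sym HG.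
Qed.

Lemma exists_facet E S : S != set0 -> exists a b, facet_defining E S a b.
Proof.
move=> S0; suff [G fG] : exists G, facet R E S G.
  by case: (fG) => [[a [b [nn eG]]] _ _]; exists a, b; split; rewrite // -eG.
have face0 : face R E S set0.
  exists (fun=> 0), 1; split=> [B _|]; first by rewrite /aff big1 ?add0r // => e _; rewrite mul0r.
  apply/setP=> B; rewrite !inE /aff big1 ?add0r ?oner_eq0 ?andbF // => e _.
  by rewrite mul0r.
suff : forall n G, face R E S G -> G != S -> (#|S| - #|G| <= n)%N ->
    exists G, facet R E S G.
  by move/(_ #|S| set0 face0); apply; rewrite ?leq_subr // eq_sym.
elim=> [|n IH] G fG GS hn; have [facG|nfG] := classic (facet R E S G); try by exists G.
all: have [H [fH HS /proper_card ltGH]] := facet_or_larger_face fG GS nfG.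
all: have leHS := subset_leq_card (face_subset fH).
  lia.
by apply: (IH H) => //; lia.
Qed.

Lemma not_at_most_level0 E S : S != set0 -> ~ at_most_level R E S 0.
Proof.
move=> S0 lev0; have [a [b fab]] := exists_facet E S0.
by have := nvalues_gt0 E a b S0; have := lev0 a b fab; lia.
Qed.

Section MaxFaceFacet.
Variables (E F : {set T}) (S : {set {set T}}) (f : nat).
Hypothesis subS : forall B, B \in S -> B \subset E.
Hypothesis exS : base_exchange S.
Hypothesis leS : forall B, B \in S -> (#|B :&: F| <= f)%N.
Hypothesis Sf : exists2 B : {set T}, B \in S & #|B :&: F| = f.
Hypothesis Slt : exists2 B : {set T}, B \in S & (#|B :&: F| < f)%N.

Definition max_face_exchange x y := exists2 B : {set T}, B \in S &
  [/\ #|B :&: F| = f, x \in B, y \notin B, y |: (B :\ x) \in S &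
      #|(y |: (B :\ x)) :&: F| = f].

Hypothesis connF : forall x y, x \in F -> y \in F ->
  clos_refl_sym_trans T max_face_exchange x y.
Hypothesis connEF : forall x y, x \in E :\: F -> y \in E :\: F ->
  clos_refl_sym_trans T max_face_exchange x y.

Local Notation coindF := (fun e => - ((e \in F)%:R : R)).

Lemma zeroset_coindicator B :
  (B \in zeroset E S coindF f%:R) = (B \in S) && (#|B :&: F| == f).
Proof.
rewrite inE; case hB: (B \in S) => //=.
by rewrite aff_coindicator ?subS // subr_eq0 eqr_nat eq_sym.
Qed.

(* Exchanges inside the maximal face force a to be constant on F and on E :\: F. *)
Lemma affine_in_meet_card a b : zeroset E S coindF f%:R \subset zeroset E S a b ->
  exists s t, forall B, B \in S -> aff E a b (ind R B) = s * #|B :&: F|%:R + t.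
Proof.
move=> sub; have zero B : B \in S -> #|B :&: F| = f -> \sum_(e in B) a e + b = 0.
  move=> hB hf; have := subsetP sub B; rewrite zeroset_coindicator hB hf eqxx inE hB.
  by rewrite aff_ind ?subS // => /(_ isT) /eqP.
have step x y : max_face_exchange x y -> a x = a y.
  move=> [B hB [hf xB yB hB' hf']]; have := zero _ hB hf; have := zero _ hB' hf'.
  rewrite big_setU1 /=; last by rewrite !inE negb_and yB orbT.
  by rewrite (big_setD1 x xB) /=; lra.
have const x y : clos_refl_sym_trans T max_face_exchange x y -> a x = a y.
  by elim=> [u v /step|u|u v _ ->|u v w _ -> _ ->].
have const_on A : (forall x y, x \in A -> y \in A -> a x = a y) ->
    exists c, forall x, x \in A -> a x = c.
  move=> hA; have [->|[x0 x0A]] := set_0Vmem A; first by exists 0 => x; rewrite inE.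
  by exists (a x0) => x xA; apply: hA.
have [al hal] := const_on F (fun x y xF yF => const x y (connF xF yF)).
have [be hbe] := const_on (E :\: F) (fun x y xF yF => const x y (connEF xF yF)).
have [Bf hBf _] := Sf.
exists (al - be), (be * #|Bf|%:R + b) => B hB.
have sumF : \sum_(e in B :&: F) a e = al * #|B :&: F|%:R.
  by rewrite (eq_bigr (fun=> al)) => [|e /setIP[_ /hal]]; rewrite ?sumr_const ?mulr_natr.
have sumEF : \sum_(e in B :\: F) a e = be * #|B :\: F|%:R.
  rewrite (eq_bigr (fun=> be)) ?sumr_const ?mulr_natr // => e /setDP[eB eF].
  by apply: hbe; rewrite inE eF (subsetP (subS hB)).
rewrite aff_ind ?subS // (big_setID F) /= sumF sumEF.
rewrite -(card_base_eq exS hB hBf) -(cardsID F B) natrD; ring.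
Qed.

Lemma max_face_facet : facet_defining E S coindF f%:R.
Proof.
have nn : nonneg_on E S coindF f%:R.
  by move=> B hB; rewrite aff_coindicator ?subS // subr_ge0 ler_nat leS.
split=> //; split; first by exists coindF, f%:R.
  have [B hB ltB] := Slt; apply/eqP/setP => /(_ B).
  by rewrite zeroset_coindicator hB (ltn_eqF ltB).
move=> _ [a [b [_ ->]]] HS sub; have [s [t val]] := affine_in_meet_card sub.
apply/eqP; rewrite eqEsubset sub andbT; apply/subsetP=> B /setIdP[hB /eqP zB].
rewrite zeroset_coindicator hB /=; apply: contraNT HS => neqf.
have [Bf hBf Bff] := Sf.
have zf : s * f%:R + t = 0.
  have BfG : Bf \in zeroset E S coindF f%:R by rewrite zeroset_coindicator hBf Bff eqxx.
  by have /setIdP[_ /eqP] := subsetP sub Bf BfG; rewrite val // Bff.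
have s0 : s = 0.
  move: zB; rewrite val // => zB.
  have /eqP : s * (f%:R - #|B :&: F|%:R) = 0 by rewrite mulrBr; lra.
  by rewrite mulf_eq0 subr_eq0 eqr_nat => /orP[/eqP|/eqP ef] //; rewrite ef eqxx in neqf.
apply/eqP/setP=> B'; rewrite inE; case hB': (B' \in S) => //=; apply/eqP.
by move: zf; rewrite val // s0 !mul0r !add0r => ->.
Qed.

End MaxFaceFacet.
End VertexValues.

Section SetSplit.
Variable T : finType.
Implicit Types (A B I K F : {set T}).

Lemma setUI_split I K F : I \subset F -> [disjoint K & F] -> (I :|: K) :&: F = I.
Proof.
by move=> sI dK; rewrite setIUl (setIidPl sI) (disjoint_setI0 dK) setU0.
Qed.

Lemma setUD_split I K F : I \subset F -> [disjoint K & F] -> (I :|: K) :\: F = K.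
Proof.
by move=> sI /setDidPl dK; move: sI; rewrite setDUl dK -setD_eq0 => /eqP->; rewrite set0U.
Qed.

Lemma setU1D1Ur I K x y : x \notin I -> y \notin I ->
  y |: ((I :|: K) :\ x) = I :|: (y |: (K :\ x)).
Proof.
move=> xI yI; apply/setP=> u; rewrite !inE.
have [->|_] := eqVneq u y; first by rewrite orbT.
by have [->|] := eqVneq u x; rewrite ?(negbTE xI).
Qed.

Lemma setU1D1Ul I K x y : x \notin K -> y \notin K ->
  y |: ((I :|: K) :\ x) = (y |: (I :\ x)) :|: K.
Proof.
move=> xK yK; apply/setP=> u; rewrite !inE.
have [->|_] := eqVneq u y; first by [].
by have [->|] := eqVneq u x; rewrite ?(negbTE xK).
Qed.

End SetSplit.

Section RankFacts.
Variables (T : finType) (Bs : {set {set T}}).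
Implicit Types (A B I : {set T}).

Lemma meet_leq_rk B A : B \in Bs -> #|B :&: A| <= rk Bs A.
Proof.
by move=> hB; rewrite setIC; apply: (@leq_bigmax_cond _ _ (fun B => #|A :&: B|)).
Qed.

Lemma rk_attained A : Bs != set0 -> exists2 B : {set T}, B \in Bs & #|B :&: A| = rk Bs A.
Proof.
rewrite -card_gt0 => Bs0.
have [B hB eB] := eq_bigmax_cond (fun B => #|A :&: B|) Bs0.
by exists B; rewrite // setIC /rk eB.
Qed.

Lemma rk_leq_card A : rk Bs A <= #|A|.
Proof. by apply/bigmax_leqP => B _; rewrite subset_leq_card ?subsetIl. Qed.

Lemma indep_leq_rk I A : indep Bs I -> I \subset A -> #|I| <= rk Bs A.
Proof.
move=> [B hB sB] sA; apply: leq_trans (meet_leq_rk A hB).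
by rewrite subset_leq_card // subsetI sB.
Qed.

Definition basis_of A J := [/\ indep Bs J, J \subset A & #|J| = rk Bs A].

Lemma rk_lt_card_outside A : Bs != set0 -> rk Bs A < #|A| ->
  exists2 e, e \in A & exists2 J, basis_of A J & e \notin J.
Proof.
move=> Bs0 ltA; have [B hB cB] := rk_attained A Bs0.
have /subsetPn[e eA eJ] : ~~ (A \subset B :&: A).
  by apply: contraTN ltA => /subset_leq_card; rewrite cB -leqNgt.
by exists e => //; exists (B :&: A) => //; split; rewrite ?subsetIr //; exists B; rewrite ?subsetIl.
Qed.

End RankFacts.

Section RestrictContract.
Variables (T : finType) (E F : {set T}) (Bs : {set {set T}}).
Hypothesis Bs0 : Bs != set0.
Hypothesis exBs : base_exchange Bs.
Implicit Types (A B I K : {set T}).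

Local Notation f := (rk Bs F).
Local Notation Rb := (restrict_bases Bs F).
Local Notation Nb := (contract_bases Bs F).

Lemma restrict_basesP I : I \in Rb -> [/\ indep Bs I, I \subset F & #|I| = f].
Proof.
by case/imsetP=> B /setIdP[hB /eqP hc] ->; split; rewrite ?subsetIr //; exists B; rewrite ?subsetIl.
Qed.

Lemma mem_restrict_bases B : B \in Bs -> #|B :&: F| = f -> B :&: F \in Rb.
Proof. by move=> hB hc; apply/imsetP; exists B; rewrite // inE hB hc eqxx. Qed.

Lemma contract_basesP K : K \in Nb ->
  exists2 B : {set T}, B \in Bs & #|B :&: F| = f /\ K = B :\: F.
Proof. by case/imsetP=> B /setIdP[hB /eqP hc] ->; exists B. Qed.

Lemma mem_contract_bases B : B \in Bs -> #|B :&: F| = f -> B :\: F \in Nb.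
Proof. by move=> hB hc; apply/imsetP; exists B; rewrite // inE hB hc eqxx. Qed.

Lemma restrict_bases_indep I : indep Bs I -> I \subset F -> f <= #|I| -> I \in Rb.
Proof.
move=> [B hB sB] sF le; have sI : I \subset B :&: F by rewrite subsetI sB.
have eI : I = B :&: F.
  by apply/eqP; rewrite eqEcard sI (leq_trans (meet_leq_rk F hB)).
by rewrite eI mem_restrict_bases // -eI; apply/eqP; rewrite eqn_leq le indep_leq_rk //; exists B.
Qed.

Lemma restrict_bases_nonempty : exists I, I \in Rb.
Proof. by have [B hB hc] := rk_attained F Bs0; exists (B :&: F); apply: mem_restrict_bases. Qed.

Lemma contract_bases_disjoint K : K \in Nb -> [disjoint K & F].
Proof. by case/contract_basesP=> B _ [_ ->]; rewrite -setI_eq0 setIDAC setDIl setDv setI0. Qed.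

Lemma restrict_contract_base I K : I \in Rb -> K \in Nb -> I :|: K \in Bs.
Proof.
move=> hI /contract_basesP[B hB [hc ->]].
have [iI sIF cI] := restrict_basesP hI.
have iB : indep Bs B by exists B.
have [I' [i1 i2 i3 i4]] := indep_extend exBs iI iB.
have hI' := indep_base exBs i1 hB i4.
have eIF : I' :&: F = I.
  by apply/esym/eqP; rewrite eqEcard subsetI i2 sIF cI meet_leq_rk.
suff -> : I :|: (B :\: F) = I' by [].
apply/esym/eqP; rewrite eqEcard; apply/andP; split.
  apply/subsetP=> u uI; move: (subsetP i3 u uI); rewrite !inE.
  case/orP=> [->//|uB]; rewrite uB andbT; case uF: (u \in F); last by rewrite orbT.
  by rewrite -eIF inE uI uF.
have := cardsID F B; have := card_base_eq exBs hB hI'; rewrite cardsU; lia.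
Qed.

Lemma contract_exchange : base_exchange Nb.
Proof.
move=> K1 K2 x h1 h2 /setDP[xK1 xK2].
have [B1 hB1 [hc1 _]] := contract_basesP h1.
move: (mem_restrict_bases hB1 hc1); move: (B1 :&: F) => I hI.
have [_ sIF cI] := restrict_basesP hI.
have d1 := contract_bases_disjoint h1; have d2 := contract_bases_disjoint h2.
have xI : x \notin I by apply: contraFN (disjointFr d1 xK1); apply: (subsetP sIF).
have xD : x \in (I :|: K1) :\: (I :|: K2) by rewrite !inE negb_or (negbTE xI) xK2 xK1.
have [y yD hy] := exBs (restrict_contract_base hI h1) (restrict_contract_base hI h2) xD.
move: yD; rewrite !inE negb_or => /andP[/andP[yI yK1] yIK2].
have yK2 : y \in K2 by move: yIK2; rewrite (negbTE yI).
exists y; first by rewrite inE yK2 yK1.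
rewrite setU1D1Ur // in hy.
have dK : [disjoint y |: (K1 :\ x) & F].
  rewrite disjoints_subset subUset sub1set inE (disjointFr d2 yK2) -disjoints_subset.
  exact: disjointWl (subsetDl _ _) d1.
by rewrite -(setUD_split sIF dK) mem_contract_bases // setUI_split.
Qed.

Lemma restrict_exchange : base_exchange Rb.
Proof.
move=> I1 I2 x h1 h2 /setDP[xI1 xI2].
have [B1 hB1 hc1] := rk_attained F Bs0; have hK := mem_contract_bases hB1 hc1.
move: hK; move: (B1 :\: F) => K hK; have dK := contract_bases_disjoint hK.
have [_ sI1 cI1] := restrict_basesP h1; have [_ sI2 _] := restrict_basesP h2.
have xK : x \notin K by rewrite (disjointFl dK) // (subsetP sI1).
have xD : x \in (I1 :|: K) :\: (I2 :|: K) by rewrite !inE negb_or xI2 (negbTE xK) xI1.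
have [y yD hy] := exBs (restrict_contract_base h1 hK) (restrict_contract_base h2 hK) xD.
move: yD; rewrite !inE negb_or => /andP[/andP[yI1 yK] yI2K].
have yI2 : y \in I2 by move: yI2K; rewrite (negbTE yK) orbF.
exists y; first by rewrite inE yI1 yI2.
rewrite setU1D1Ul // in hy.
have sI : y |: (I1 :\ x) \subset F.
  by rewrite subUset sub1set (subsetP sI2) // (subset_trans (subsetDl _ _) sI1).
by rewrite -(setUI_split sI dK) mem_restrict_bases // setUI_split // cardsU1D1.
Qed.

Hypothesis flatF : forall e, e \in E :\: F -> f < rk Bs (e |: F).

Lemma flat_indep_setU1 e I : e \in E :\: F -> I \in Rb -> indep Bs (e |: I).
Proof.
move=> eEF hI; have [iI sIF cI] := restrict_basesP hI.
have [B hB cB] := rk_attained (e |: F) Bs0.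
have iL : indep Bs (B :&: (e |: F)) by exists B; rewrite ?subsetIl.
have [|z /setDP[/setIP[_] /setU1P[->//|zF] zI] hz] := indep_augment exBs iI iL.
  by rewrite cB cI flatF.
have sZ : z |: I \subset F by rewrite subUset sub1set zF.
by have := indep_leq_rk hz sZ; rewrite cardsU1 zI cI ltnn.
Qed.

End RestrictContract.

Section SmallMinors.
Variables (T : finType) (S : {set {set T}}).
Hypothesis exS : base_exchange S.
Implicit Types (A B : {set T}).

Lemma restrict_bases_id A : (forall B, B \in S -> B \subset A) -> restrict_bases S A = S.
Proof.
move=> subS; have [->|S0] := eqVneq S set0; first by rewrite /restrict_bases setIdE set0I imset0.
have [B0 hB0 cB0] := rk_attained A S0.
apply/setP=> B; apply/imsetP/idP => [[B' /setIdP[hB' _] ->]|hB].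
  by rewrite (setIidPl (subS B' hB')).
exists B; last by rewrite (setIidPl (subS B hB)).
by rewrite inE hB (setIidPl (subS B hB)) -cB0 (setIidPl (subS B0 hB0)) (card_base_eq exS hB hB0) /=.
Qed.

Lemma contract_bases_set0 : contract_bases S set0 = S.
Proof.
have r0 : rk S set0 = 0 by apply/eqP; rewrite -leqn0 -(cards0 T) rk_leq_card.
apply/setP=> B; apply/imsetP/idP => [[B' /setIdP[hB' _] ->]|hB]; first by rewrite setD0.
by exists B; rewrite ?setD0 // inE hB setI0 cards0 r0.
Qed.

Lemma contract_bases_set1 e : (exists2 B : {set T}, B \in S & e \in B) ->
  contract_bases S [set e] = contract1_bases S e.
Proof.
move=> [B1 hB1 eB1].
have r1 : rk S [set e] = 1.
  apply/eqP; rewrite eqn_leq -{1}(cards1 e) rk_leq_card /=.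
  by have := meet_leq_rk [set e] hB1; rewrite (setIidPr _) ?sub1set // cards1.
have meet1 B : #|B :&: [set e]| = (e \in B).
  case: (boolP (e \in B)) => eB; first by rewrite (setIidPr _) ?cards1 ?sub1set.
  by apply/eqP; rewrite cards_eq0 setI_eq0 disjoint_sym disjoints1.
apply/setP=> K; apply/imsetP/imsetP => -[B hB ->]; exists B => //; move: hB.
  by rewrite !inE meet1 r1; case: (e \in B).
by rewrite !inE meet1 r1; case: (e \in B).
Qed.

Lemma restrict_bases_setD1 (E : {set T}) e : (forall B, B \in S -> B \subset E) ->
  (exists2 B : {set T}, B \in S & e \notin B) -> restrict_bases S (E :\ e) = delete_bases S e.
Proof.
move=> subS [B1 hB1 eB1].
have sE B : B \in S -> e \notin B -> B :&: (E :\ e) = B.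
  move=> hB eB; apply/setIidPl/subsetP=> u uB; rewrite !inE (subsetP (subS B hB)) // andbT.
  by apply: contraNneq eB => <-.
have rE : rk S (E :\ e) = #|B1|.
  apply/eqP; rewrite eqn_leq -{2}(sE B1 hB1 eB1) meet_leq_rk // andbT.
  by apply/bigmax_leqP=> B hB; rewrite -(card_base_eq exS hB hB1) subset_leq_card ?subsetIr.
apply/setP=> B; apply/imsetP/idP => [[B' /setIdP[hB' /eqP cB'] ->]|/setIdP[hB eB]].
  have eB' : B' :&: (E :\ e) = B'.
    by apply/eqP; rewrite eqEcard subsetIl cB' rE (card_base_eq exS hB1 hB') leqnn.
  by rewrite eB' inE hB' /= -eB' !inE eqxx andbF.
by exists B; rewrite ?sE // inE hB sE // rE (card_base_eq exS hB hB1) eqxx.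
Qed.

End SmallMinors.

Section OneElement.
Variables (T : finType) (E F : {set T}) (Bs : {set {set T}}) (e : T).
Hypothesis Bs0 : Bs != set0.
Hypothesis subBs : forall B, B \in Bs -> B \subset E.
Hypothesis exBs : base_exchange Bs.
Hypothesis flatF : forall e, e \in E :\: F -> rk Bs F < rk Bs (e |: F).
Hypothesis eEF : e \in E :\: F.
Implicit Types (A B I K : {set T}).

Local Notation f := (rk Bs F).
Local Notation Rb := (restrict_bases Bs F).
Local Notation Nb := (contract_bases Bs F).

Lemma e_notin_F : e \notin F.
Proof. by case/setDP: eEF. Qed.

Lemma notin_restrict_base I : I \in Rb -> e \notin I.
Proof. by case/restrict_basesP=> _ sIF _; apply: contraNN e_notin_F; apply: (subsetP sIF). Qed.

Lemma contract_base_containing : exists2 K : {set T}, K \in Nb & e \in K.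
Proof.
have [I hI] := restrict_bases_nonempty F Bs0.
have [iI sIF cI] := restrict_basesP hI.
have [B hB] : exists B, B \in Bs by apply/set0Pn.
have iB : indep Bs B by exists B.
have [I' [i1 i2 i3 i4]] := indep_extend exBs (flat_indep_setU1 Bs0 exBs flatF eEF hI) iB.
have hI' := indep_base exBs i1 hB i4.
exists (I' :\: F); last by rewrite inE e_notin_F (subsetP i2) // setU11.
apply: mem_contract_bases => //; apply/eqP; rewrite eqn_leq meet_leq_rk // -cI.
by rewrite subset_leq_card // subsetI sIF (subset_trans (subsetUr _ _) i2).
Qed.

Lemma base_containing : exists2 B : {set T}, B \in Bs & e \in B.
Proof.
have [K /contract_basesP[B hB [_ ->]]] := contract_base_containing.
by case/setDP=> eB _; exists B.
Qed.

Lemma base_containing_same_meet B : B \in Bs ->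
  exists2 B' : {set T}, B' \in Bs & e \in B' /\ #|B' :&: F| = #|B :&: F|.
Proof.
move=> hB; have [I hI] := restrict_bases_nonempty F Bs0.
have [iI sIF cI] := restrict_basesP hI.
have iBF : indep Bs (B :&: F) by exists B; rewrite ?subsetIl.
have [I' [i1 i2 i3 i4]] := indep_extend exBs iBF iI.
have sI'F : I' \subset F by rewrite (subset_trans i3) // subUset subsetIr.
have hI' : I' \in Rb by apply: restrict_bases_indep; rewrite -?cI.
have ieBF : indep Bs (e |: (B :&: F)).
  by apply: indep_subset (flat_indep_setU1 Bs0 exBs flatF eEF hI') _; rewrite setUS.
have iB : indep Bs B by exists B.
have [B' [j1 j2 j3 j4]] := indep_extend exBs ieBF iB.
have hB' := indep_base exBs j1 hB j4.
exists B' => //; split; first by rewrite (subsetP j2) // setU11.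
suff -> : B' :&: F = B :&: F by [].
apply/eqP; rewrite eqEsubset andbC subsetI (subset_trans (subsetUr _ _) j2) subsetIr /=.
apply/subsetP=> u /setIP[uB' uF]; rewrite inE uF andbT.
move: (subsetP j3 u uB'); rewrite !inE uF !andbT -orbA => /orP[/eqP eu|/orP[]//].
by move: e_notin_F; rewrite -eu uF.
Qed.

Lemma contract1_minor :
  restrict_bases (contract_bases Bs [set e]) (E :\ e) = contract1_bases Bs e.
Proof.
rewrite contract_bases_set1; last exact: base_containing.
rewrite restrict_bases_id //; first exact: contract1_exchange.
by move=> _ /imsetP[B /setIdP[hB _] ->]; apply: setSD (subBs hB).
Qed.

Section NotColoop.
Hypothesis e_not_coloop : exists2 J, basis_of Bs (E :\: F) J & e \notin J.

Lemma base_avoiding : exists2 B : {set T}, B \in Bs & e \notin B.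
Proof.
have [J [iJ sJ cJ] eJ] := e_not_coloop.
apply: NNPP => noB; have [B hB] : exists B, B \in Bs by apply/set0Pn.
have iB : indep Bs B by exists B.
have [I' [i1 i2 i3 i4]] := indep_extend exBs iJ iB.
have eI' : e \in I'.
  by apply: NNPP => eI'; apply: noB; exists I'; rewrite ?(indep_base exBs i1 hB i4) //; apply/negP.
have ieJ : indep Bs (e |: J) by apply: indep_subset i1 _; rewrite subUset sub1set eI' i2.
have seJ : e |: J \subset E :\: F by rewrite subUset sub1set eEF sJ.
by have := indep_leq_rk ieJ seJ; rewrite cardsU1 eJ cJ ltnn.
Qed.

Lemma base_avoiding_min_meet : exists2 B0 : {set T}, B0 \in Bs &
  e \notin B0 /\ forall B, B \in Bs -> #|B0 :&: F| <= #|B :&: F|.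
Proof.
have [J [iJ sJ cJ] eJ] := e_not_coloop.
have [B1 h1 e1] := base_avoiding; have iB1 : indep Bs B1 by exists B1.
have [B0 [i1 i2 i3 i4]] := indep_extend exBs iJ iB1.
have hB0 := indep_base exBs i1 h1 i4.
exists B0 => //; split.
  by apply: contraNN e1 => /(subsetP i3); rewrite inE (negbTE eJ).
move=> B hB; have c1 : #|B :\: F| <= #|J|.
  by rewrite cJ indep_leq_rk ?setSD ?subBs //; exists B; rewrite ?subsetDl.
have c2 : #|J| <= #|B0 :\: F|.
  by rewrite subset_leq_card // subsetD i2 disjoints_subset (subset_trans sJ) // setDE subsetIr.
have := cardsID F B; have := cardsID F B0; have := card_base_eq exBs hB0 hB; lia.
Qed.

Lemma contract_base_avoiding : exists2 K : {set T}, K \in Nb & e \notin K.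
Proof.
have [B1 h1 e1] := base_avoiding; have [I hI] := restrict_bases_nonempty F Bs0.
have [iI sIF cI] := restrict_basesP hI; have iB1 : indep Bs B1 by exists B1.
have [I' [i1 i2 i3 i4]] := indep_extend exBs iI iB1.
have hI' := indep_base exBs i1 h1 i4.
exists (I' :\: F).
  apply: mem_contract_bases => //; apply/eqP; rewrite eqn_leq meet_leq_rk // -cI.
  by rewrite subset_leq_card // subsetI sIF i2.
rewrite inE negb_and e_notin_F /=; apply: contraNN e1 => /(subsetP i3).
by rewrite inE (negbTE (notin_restrict_base hI)).
Qed.

Lemma delete_minor :
  restrict_bases (contract_bases Bs set0) (E :\ e) = delete_bases Bs e.
Proof. by rewrite contract_bases_set0 // restrict_bases_setD1 //; apply: base_avoiding. Qed.

End NotColoop.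

End OneElement.

Section MinorLevelness.
Variables (R : realType) (T : finType) (E F : {set T}) (Bs : {set {set T}}) (e : T) (k : nat).
Hypothesis Bs0 : Bs != set0.
Hypothesis subBs : forall B, B \in Bs -> B \subset E.
Hypothesis exBs : base_exchange Bs.
Hypothesis connR : connected F (restrict_bases Bs F).
Hypothesis levelF : flacet_level R E Bs F k.
Implicit Types (A B I K : {set T}).

Local Notation f := (rk Bs F).
Local Notation Rb := (restrict_bases Bs F).

Lemma meet_lt_rk : 1 < k -> exists2 B : {set T}, B \in Bs & #|B :&: F| < f.
Proof.
rewrite -levelF => lt1; apply: NNPP => noB; move: lt1; rewrite ltnNge.
apply/negP/negPn/(nvalues_le1 (c := (f%:R)%R)) => B hB.
rewrite aff_indicator ?subBs //; congr (_%:R)%R; apply/eqP; rewrite eqn_leq meet_leq_rk //.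
by rewrite leqNgt; apply/negP => ltB; apply: noB; exists B.
Qed.

(* S and N are the bases of a single-element minor M' of M (M \ e or M / e)
   and of M' / F. *)
Variables (S N : {set {set T}}).
Hypothesis subS : forall B, B \in S -> B \subset E :\ e.
Hypothesis exS : base_exchange S.
Hypothesis meetS : forall B, B \in S -> #|B :&: F| <= f.
Hypothesis splitS : forall I K, I \in Rb -> K \in N -> I :|: K \in S.
Hypothesis disjN : forall K, K \in N -> [disjoint K & F].
Hypothesis N0 : N != set0.
Hypothesis exN : base_exchange N.
Hypothesis connN : circuit_connected ((E :\: F) :\ e) N.
Hypothesis valuesS : forall B, B \in Bs ->
  exists2 B' : {set T}, B' \in S & #|B' :&: F| = #|B :&: F|.

Lemma restrict_exchange_max_face I K x y : I \in Rb -> K \in N ->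
  x \in I -> y \notin I -> y \in F -> y |: (I :\ x) \in Rb -> max_face_exchange F S f x y.
Proof.
move=> hI hK xI yI yF hI'; have [_ sIF cI] := restrict_basesP hI.
have [_ sI'F cI'] := restrict_basesP hI'; have dK := disjN hK.
have xK : x \notin K by rewrite (disjointFl dK) // (subsetP sIF).
have yK : y \notin K by rewrite (disjointFl dK).
exists (I :|: K); first exact: splitS.
by rewrite setUI_split // inE xI !inE negb_or yI yK setU1D1Ul // splitS // setUI_split.
Qed.

Lemma contract_exchange_max_face I K x y : I \in Rb -> K \in N ->
  x \in K -> y \notin K -> y \notin F -> y |: (K :\ x) \in N -> max_face_exchange F S f x y.
Proof.
move=> hI hK xK yK yF hK'; have [_ sIF cI] := restrict_basesP hI.
have xI : x \notin I by apply: contraFN (disjointFr (disjN hK) xK); apply: (subsetP sIF).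
have yI : y \notin I by apply: contraNN yF; apply: (subsetP sIF).
exists (I :|: K); first exact: splitS.
rewrite setUI_split ?disjN // !inE xK orbT negb_or yI yK setU1D1Ur //.
by rewrite splitS // setUI_split ?disjN.
Qed.

Local Notation coindF := (fun e => - ((e \in F)%:R : R))%R.

Lemma minor_max_face_facet : 1 < k -> facet_defining (E :\ e) S coindF (f%:R)%R.
Proof.
move=> k1; have [I0 hI0] := restrict_bases_nonempty F Bs0.
have /set0Pn[K0 hK0] := N0; have [_ sI0 cI0] := restrict_basesP hI0.
have Sf : exists2 B : {set T}, B \in S & #|B :&: F| = f.
  by exists (I0 :|: K0); rewrite ?splitS // setUI_split ?disjN.
have Slt : exists2 B : {set T}, B \in S & #|B :&: F| < f.
  by have [B /valuesS[B' hB' eB'] ltB] := meet_lt_rk k1; exists B'; rewrite ?eB'.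
apply: (max_face_facet R subS exS meetS Sf Slt) => [x y xF yF|x y xEF yEF].
  have [<-|xy] := eqVneq x y; first exact: rst_refl.
  have [C [hC [xC yC]]] := connR xF yF xy.
  have [I hI [xI yI hI']] := circuit_base_exchange (restrict_exchange Bs0 exBs) hC xC yC xy.
  exact/rst_step/(restrict_exchange_max_face hI hK0).
rewrite setDDl setUC -setDDl in xEF yEF.
apply: clos_rst_weaken (connN xEF yEF) => u v [C [hC [uC vC]]] uv.
have [K hK [uK vK hK']] := circuit_base_exchange exN hC uC vC uv.
have vF : v \notin F by case: hC => /subsetP/(_ v vC); rewrite !inE => /andP[_ /andP[]].
exact: contract_exchange_max_face hI0 hK uK vK vF hK'.
Qed.

Lemma nvalues_minor_geq : k <= nvalues (E :\ e) S coindF (f%:R)%R.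
Proof.
rewrite -levelF; apply: (nvalues_le_inj (subrI (f%:R)%R)) => B hB.
have [B' hB' eB'] := valuesS hB; exists B' => //.
by rewrite aff_coindicator ?subS // aff_indicator ?subBs // eB'.
Qed.

Lemma minor_levelness_gt j : j < k -> ~ at_most_level R (E :\ e) S j.
Proof.
move=> ltjk levj; have [I0 hI0] := restrict_bases_nonempty F Bs0.
have /set0Pn[K0 hK0] := N0.
have S0 : S != set0 by apply/set0Pn; exists (I0 :|: K0); exact: splitS.
have [k1|k_le1] := ltnP 1 k; last first.
  have j0 : j = 0 by lia.
  by move: levj; rewrite j0; apply: not_at_most_level0.
by have := levj _ _ (minor_max_face_facet k1); have := nvalues_minor_geq; lia.
Qed.

End MinorLevelness.

Section DeleteOrContract.
Variables (R : realType) (T : finType) (E F : {set T}) (Bs : {set {set T}}) (e : T) (k : nat).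
Hypothesis Bs0 : Bs != set0.
Hypothesis subBs : forall B, B \in Bs -> B \subset E.
Hypothesis exBs : base_exchange Bs.
Hypothesis flatF : forall e, e \in E :\: F -> rk Bs F < rk Bs (e |: F).
Hypothesis connR : connected F (restrict_bases Bs F).
Hypothesis levelF : flacet_level R E Bs F k.
Hypothesis eEF : e \in E :\: F.
Hypothesis e_not_coloop : exists2 J, basis_of Bs (E :\: F) J & e \notin J.

Local Notation Rb := (restrict_bases Bs F).
Local Notation Nb := (contract_bases Bs F).
Local Notation D := ((E :\: F) :\ e).

Lemma contract_minor_delete_or_contract : connected (E :\: F) Nb ->
  circuit_connected D (delete_bases Nb e) \/ circuit_connected D (contract1_bases Nb e).
Proof.
move=> connN; apply: two_colouring_connected => u v /setD1P[ue uEF] /setD1P[ve vEF] uv.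
have [C [hC [uC vC]]] := connN u v uEF vEF uv.
have [eC|eC] := boolP (e \in C).
  by right; exists (C :\ e); split; [apply: contract1_circuit | rewrite !inE ue uC ve vC].
left; exists C; split=> //; apply: delete_circuit eC => //; first exact: contract_exchange.
by have [K hK eK] := contract_base_avoiding Bs0 exBs eEF e_not_coloop; exists K.
Qed.

Lemma delete_levelness_gt j : j < k -> circuit_connected D (delete_bases Nb e) ->
  ~ at_most_level R (E :\ e) (delete_bases Bs e) j.
Proof.
move=> ltjk connDel; have [K3 hK3 eK3] := contract_base_avoiding Bs0 exBs eEF e_not_coloop.
have splitS I K : I \in Rb -> K \in delete_bases Nb e -> I :|: K \in delete_bases Bs e.
  move=> hI /setIdP[hK eK].
  rewrite inE (restrict_contract_base Bs0 exBs hI hK) /= inE negb_or eK andbT.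
  by have := notin_restrict_base eEF hI.
apply: (minor_levelness_gt Bs0 subBs exBs connR levelF
  (e := e) (S := delete_bases Bs e) (N := delete_bases Nb e)) => //.
- by move=> B /setIdP[hB eB]; rewrite subsetD1 subBs.
- exact: delete_exchange.
- by move=> B /setIdP[hB _]; apply: meet_leq_rk.
- by move=> K /setIdP[hK _]; apply: contract_bases_disjoint hK.
- by apply/set0Pn; exists K3; rewrite inE hK3.
- exact/delete_exchange/contract_exchange.
have [B0 hB0 [eB0 minB0]] := base_avoiding_min_meet Bs0 subBs exBs eEF e_not_coloop.
move=> B hB; have [I0 hI0] := restrict_bases_nonempty F Bs0.
have [_ sI0 cI0] := restrict_basesP hI0.
have hIK : I0 :|: K3 \in delete_bases Bs e by apply: splitS; rewrite ?inE ?hK3.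
have hB0' : B0 \in delete_bases Bs e by rewrite inE hB0.
apply: (base_meet_card_between (delete_exchange (e := e) exBs) hB0' hIK).
rewrite minB0 // setUI_split //; last exact: contract_bases_disjoint hK3.
by rewrite cI0 meet_leq_rk.
Qed.

Lemma contract1_levelness_gt j : j < k -> circuit_connected D (contract1_bases Nb e) ->
  ~ at_most_level R (E :\ e) (contract1_bases Bs e) j.
Proof.
move=> ltjk connCon; have [K4 hK4 eK4] := contract_base_containing Bs0 exBs flatF eEF.
apply: (minor_levelness_gt Bs0 subBs exBs connR levelF
  (e := e) (S := contract1_bases Bs e) (N := contract1_bases Nb e)) => //.
- by move=> _ /imsetP[B /setIdP[hB _] ->]; apply: setSD (subBs hB).
- exact: contract1_exchange.
- move=> _ /imsetP[B /setIdP[hB _] ->].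
  by apply: leq_trans (meet_leq_rk F hB); rewrite subset_leq_card // setSI // subsetDl.
- move=> I _ hI /imsetP[K /setIdP[hK eK] ->]; apply/imsetP; exists (I :|: K).
    by rewrite inE (restrict_contract_base Bs0 exBs hI hK) inE eK orbT.
  rewrite setDUl [I :\ e](setDidPl _) //.
  by rewrite disjoint_sym disjoints1 (notin_restrict_base eEF hI).
- move=> _ /imsetP[K /setIdP[hK _] ->].
  exact: disjointWl (subsetDl _ _) (contract_bases_disjoint hK).
- by apply/set0Pn; exists (K4 :\ e); apply/imsetP; exists K4; rewrite ?inE ?hK4.
- exact/contract1_exchange/contract_exchange.
move=> B /(base_containing_same_meet Bs0 exBs flatF eEF)[B' hB' [eB' <-]].
exists (B' :\ e); first by apply/imsetP; exists B'; rewrite ?inE ?hB'.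
rewrite setIDAC (setDidPl _) //.
by rewrite disjoint_sym disjoints1 inE (negbTE (e_notin_F eEF)) andbF.
Qed.

End DeleteOrContract.

Unset Implicit Arguments.

Theorem proposition6p4 (R : realType) (T : finType) (E : {set T})
    (Bs : {set {set T}}) (k : nat) (F : {set T}) :
  is_matroid E Bs ->
  minimally_level R E Bs k ->
  flacet E Bs F ->
  flacet_level R E Bs F k ->
  rk Bs (E :\: F) = #|E :\: F|.
Proof.
move=> [Bs0 subBs exBs] [_ minorsM] [[_ flatF] _ _ connR connN] levelF.
apply/eqP; rewrite eqn_leq rk_leq_card leqNgt; apply/negP => ltEF.
have [e eEF e_not_coloop] := rk_lt_card_outside Bs0 ltEF.
have eE : [set e] \subset E by rewrite sub1set; case/setDP: eEF.
have e0 : [set e] != set0 by rewrite -card_gt0 cards1.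
have [connDel|connCon] :=
  contract_minor_delete_or_contract Bs0 exBs eEF e_not_coloop connN.
- have d0e : [disjoint set0 & [set e]] by rewrite -setI_eq0 set0I.
  have := minorsM _ _ (sub0set _) eE d0e; rewrite set0U => /(_ e0)[j ltjk [levj _]].
  rewrite (delete_minor Bs0 subBs exBs eEF e_not_coloop) in levj.
  exact: (delete_levelness_gt Bs0 subBs exBs connR levelF eEF e_not_coloop ltjk connDel levj).
- have de0 : [disjoint [set e] & set0] by rewrite -setI_eq0 setI0.
  have := minorsM _ _ eE (sub0set _) de0; rewrite setU0 => /(_ e0)[j ltjk [levj _]].
  rewrite (contract1_minor Bs0 subBs exBs flatF eEF) in levj.
  exact: (contract1_levelness_gt Bs0 subBs exBs flatF connR levelF eEF ltjk connCon levj).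
Qed.
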